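(* Let $n\ge 5$, $k\in\{2,\dots,n-2\}$, and let $P=(P_i)_{i\in\mathbb Z/n}$ be an $n$-gon and $(q_i)_{i\in\mathbb Z/n}$ an $n$-tuple of lines in the projective plane, in general position. Put $Q_i=q_i\cap q_{i-k}$, so that $Q=(Q_i)$ is an $n$-gon with $q_i=Q_iQ_{i+k}$. Then the following are equivalent: (i) for every $i$, the lines $P_iP_{i+1}$, $q_i$, $q_{i-k}$ are concurrent, and the lines $P_iP_{i+k}$, $q_i$, $q_{i-1}$ are concurrent (equivalently, all quadrilateral tiles with clockwise vertex labels $q_{i-k},P_{i+1},q_i,P_i$ and $P_i,q_i,P_{i+k},q_{i-1}$ are coherent); (ii) $Q$ is inscribed in $P$ and $T_k(Q)$ is inscribed in $T_k(P)$.
   Context: For an $n$-gon $P=(P_i)_{i\in\mathbb Z/n}$ in the projective plane and $k\in\{2,\dots,n-2\}$, the $k$-diagonal pentagram map is $T_k(P)=P'$ with $P'_i=P_iP_{i+k}\cap P_{i+1}P_{i+k+1}$ (here $XY$ denotes the line through $X,Y$). A polygon $Q$ is inscribed in $P$ (same number of vertices) if $Q_i$ lies on the line $P_iP_{i+1}$ for all $i$. A quadrilateral tile labeled by points $A,B$ and lines $c,d$ is coherent iff $A=B$, or $c=d$, or the lines $AB$, $c$, $d$ are concurrent; more generally coherence means the multi-ratio $\frac{\boldsymbol c(\mathbf A)\boldsymbol d(\mathbf B)}{\boldsymbol c(\mathbf B)\boldsymbol d(\mathbf A)}$ of lifts equals $1$. *)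

(* Projective plane P^2(F) over an arbitrary field F,
   in homogeneous coordinates: points and lines are (nonzero) vectors of F^3,
   incidence is the dot product, the line through two points and the
   intersection of two lines are cross products. *)
From mathcomp Require Import all_boot all_order all_algebra.
Set Implicit Arguments. Unset Strict Implicit. Unset Printing Implicit Defensive.
Import GRing.Theory Num.Theory.
Local Open Scope ring_scope.

Section Proj.
Variable F : fieldType.

Definition vec3 := (F * F * F)%type.

Definition dot (u v : vec3) : F :=
  let: (u1, u2, u3) := u in let: (v1, v2, v3) := v in u1 * v1 + u2 * v2 + u3 * v3.

Definition cross (u v : vec3) : vec3 :=
  let: (u1, u2, u3) := u in let: (v1, v2, v3) := v in
  (u2 * v3 - u3 * v2, u3 * v1 - u1 * v3, u1 * v2 - u2 * v1).

Definition det3 (u v w : vec3) : F := dot u (cross v w).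

Definition join (X Y : vec3) : vec3 := cross X Y.
Definition meet (l m : vec3) : vec3 := cross l m.
Definition incident (X l : vec3) : bool := dot X l == 0.
Definition concurrent (l m r : vec3) : bool := det3 l m r == 0.

(* An n-gon (or n-tuple of lines) indexed by Z/n is an n-periodic map int -> vec3. *)
Definition periodic (n : nat) (P : int -> vec3) := forall i : int, P (i + n%:Z) = P i.

Definition distinct_mod (n : nat) (i j : int) : bool := ~~ (n%:Z %| (i - j))%Z.

Definition no_three_dependent (n : nat) (P : int -> vec3) :=
  forall i j l : int, distinct_mod n i j -> distinct_mod n j l -> distinct_mod n i l ->
    det3 (P i) (P j) (P l) != 0.

Definition Tk (k : nat) (P : int -> vec3) : int -> vec3 := fun i =>
  meet (join (P i) (P (i + k%:Z))) (join (P (i + 1)) (P (i + k%:Z + 1))).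

Definition inscribed (Q P : int -> vec3) := forall i : int, incident (Q i) (join (P i) (P (i + 1))).

Definition Qof (k : nat) (q : int -> vec3) : int -> vec3 := fun i => meet (q i) (q (i - k%:Z)).

(* general position of (P, q): P has no three collinear vertices, no three of the
   lines q are concurrent, and the polygons T_k(P), T_k(Q) produced by the
   constructions of the statement are again nondegenerate (no three collinear). *)
Definition general_position (n k : nat) (P q : int -> vec3) :=
  [/\ no_three_dependent n P, no_three_dependent n q,
      no_three_dependent n (Tk k P) & no_three_dependent n (Tk k (Qof k q))].

End Proj.

(* The first concurrence of (i) is literally the incidence of Q_i = q_i /\ q_{i-k}
   with P_iP_{i+1}.  For the second, note that Q_i and Q_{i+k} both lie on q_i, so
   the vertex T_k(Q)_i is q_i /\ q_{i+1}; dually, T_k(P)_i and T_k(P)_{i+1} both lie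
   on P_{i+1}P_{i+k+1}, which is therefore their join.  Hence T_k(Q)_i lies on
   T_k(P)_iT_k(P)_{i+1} iff P_{i+1}P_{i+k+1}, q_{i+1}, q_i are concurrent.  General
   position guarantees that the scalar factors in these projective identities are
   nonzero. *)
From mathcomp Require Import all_boot all_order all_algebra.
From mathcomp Require Import ring.
Import GRing.Theory Num.Theory.
Set Implicit Arguments. Unset Strict Implicit.
Local Open Scope ring_scope.

Section ProjectiveIdentities.
Variable F : fieldType.
Implicit Types (g h : F) (a b m u v w l : vec3 F).

Definition scale3 g u : vec3 F :=
  let: (u1, u2, u3) := u in (g * u1, g * u2, g * u3).

Lemma dotC u v : dot u v = dot v u.
Proof. by case: u => [[u1 u2] u3]; case: v => [[v1 v2] v3]; rewrite /dot; ring. Qed.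

Lemma dot_scale3 g u v : dot (scale3 g u) v = g * dot u v.
Proof. by case: u => [[u1 u2] u3]; case: v => [[v1 v2] v3]; rewrite /dot; ring. Qed.

Lemma cross_scale3 g h u v : cross (scale3 g u) (scale3 h v) = scale3 (g * h) (cross u v).
Proof.
case: u => [[u1 u2] u3]; case: v => [[v1 v2] v3].
by rewrite /cross /=; congr (_, _, _); ring.
Qed.

Lemma det3C u v w : det3 u v w = det3 w u v.
Proof.
case: u => [[u1 u2] u3]; case: v => [[v1 v2] v3]; case: w => [[w1 w2] w3].
by rewrite /det3 /dot /cross; ring.
Qed.

(* Both are instances of [x × (y × z) = (x·z) y - (x·y) z]. *)
Lemma cross_cross_inner a m b : cross (cross a m) (cross m b) = scale3 (det3 a m b) m.
Proof.
case: a => [[a1 a2] a3]; case: m => [[m1 m2] m3]; case: b => [[b1 b2] b3].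
by rewrite /det3 /cross /dot /=; congr (_, _, _); ring.
Qed.

Lemma cross_cross_outer m a b : cross (cross m a) (cross b m) = scale3 (- det3 m a b) m.
Proof.
case: a => [[a1 a2] a3]; case: m => [[m1 m2] m3]; case: b => [[b1 b2] b3].
by rewrite /det3 /cross /dot /=; congr (_, _, _); ring.
Qed.

Lemma dot_scale3_eq0 g u l :
  scale3 g u != (0, 0, 0) -> (dot (scale3 g u) l == 0) = (dot u l == 0).
Proof.
have [-> | g_neq0 _] := eqVneq g 0; last by rewrite dot_scale3 mulf_eq0 (negbTE g_neq0).
by case: u => [[u1 u2] u3]; rewrite /= !mul0r eqxx.
Qed.

Lemma det3_neq0_vec u v w : det3 u v w != 0 -> u != (0, 0, 0).
Proof.
apply: contraNneq => ->; rewrite /det3.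
by case: (cross v w) => [[x1 x2] x3]; rewrite /dot !mul0r !addr0.
Qed.

Lemma det3_neq0_cross u v w : det3 u v w != 0 -> cross u v != (0, 0, 0).
Proof.
rewrite det3C; apply: contraNneq => E; rewrite /det3 E.
by case: w => [[w1 w2] w3]; rewrite /dot !mulr0 !addr0.
Qed.

Lemma concurrent_incident_meet l u v : concurrent l u v = incident (meet u v) l.
Proof. by rewrite /concurrent /incident /det3 dotC. Qed.

Lemma concurrentCr l u v : concurrent l u v = concurrent l v u.
Proof.
rewrite /concurrent -oppr_eq0; congr (_ == 0).
case: l => [[l1 l2] l3]; case: u => [[u1 u2] u3]; case: v => [[v1 v2] v3].
by rewrite /det3 /dot /cross; ring.
Qed.

End ProjectiveIdentities.

Lemma distinct_mod_addr (n d : nat) (i : int) : (0 < d < n)%N -> distinct_mod n i (i + d%:Z).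
Proof.
case/andP=> d_gt0 d_lt_n; rewrite /distinct_mod dvdzE.
by rewrite (_ : i - (i + d%:Z) = - d%:Z) ?abszN ?gtnNdvd //; ring.
Qed.

Lemma no_three_dependent_consecutive (F : fieldType) (n : nat) (P : int -> vec3 F) (i : int) :
  (2 < n)%N -> no_three_dependent n P -> det3 (P i) (P (i + 1)) (P (i + 2)) != 0.
Proof.
move=> n_gt2 P_gen; have n_gt1 : (1 < n)%N by apply: ltnW.
apply: P_gen; rewrite ?distinct_mod_addr ?n_gt1 //.
by rewrite (_ : i + 2 = (i + 1) + 1%:Z) ?distinct_mod_addr ?n_gt1 //; ring.
Qed.

Section PentagramIncidence.
Variables (F : fieldType) (k : nat).
Implicit Types (P q : int -> vec3 F) (i : int).

(* Q_i and Q_{i+k} span q_i. *)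
Lemma Tk_Qof q i : exists g, Tk k (Qof k q) i = scale3 g (meet (q i) (q (i + 1))).
Proof.
rewrite /Tk /Qof /meet /join.
have -> : i + k%:Z - k%:Z = i by ring.
have -> : i + k%:Z + 1 - k%:Z = i + 1 by ring.
by rewrite !cross_cross_outer cross_scale3; eexists.
Qed.

(* T_k(P)_i and T_k(P)_{i+1} both lie on P_{i+1}P_{i+k+1}. *)
Lemma join_Tk P i :
  exists g, join (Tk k P i) (Tk k P (i + 1)) = scale3 g (join (P (i + 1)) (P (i + k%:Z + 1))).
Proof.
rewrite /Tk /join /meet (_ : i + 1 + k%:Z = i + k%:Z + 1); last by ring.
by rewrite cross_cross_inner; eexists.
Qed.

Lemma incident_Tk_Qof (n : nat) P q i :
  (2 < n)%N -> no_three_dependent n (Tk k P) -> no_three_dependent n (Tk k (Qof k q)) ->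
  incident (Tk k (Qof k q) i) (join (Tk k P i) (Tk k P (i + 1)))
  = concurrent (join (P (i + 1)) (P (i + 1 + k%:Z))) (q (i + 1)) (q i).
Proof.
move=> n_gt2 TP_gen TQ_gen.
have [g TQ_E] := Tk_Qof q i; have [h TP_E] := join_Tk P i.
have TQ_neq0 := det3_neq0_vec (no_three_dependent_consecutive i n_gt2 TQ_gen).
have TP_neq0 : join (Tk k P i) (Tk k P (i + 1)) != (0, 0, 0).
  exact: det3_neq0_cross (no_three_dependent_consecutive i n_gt2 TP_gen).
rewrite TQ_E TP_E in TQ_neq0 TP_neq0 *.
rewrite /incident dot_scale3_eq0 // dotC dot_scale3_eq0 // dotC.
rewrite concurrentCr concurrent_incident_meet.
by rewrite (_ : i + 1 + k%:Z = i + k%:Z + 1); last ring.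
Qed.

End PentagramIncidence.

Theorem mainTheorem2 (F : fieldType) (n k : nat) (P q : int -> vec3 F) :
  (5 <= n)%N -> (2 <= k)%N -> (k <= n - 2)%N ->
  periodic n P -> periodic n q ->
  general_position n k P q ->
  let Q := Qof k q in
  (forall i : int,
      concurrent (join (P i) (P (i + 1))) (q i) (q (i - k%:Z)) /\
      concurrent (join (P i) (P (i + k%:Z))) (q i) (q (i - 1)))
  <-> (inscribed Q P /\ inscribed (Tk k Q) (Tk k P)).
Proof.
move=> n_ge5 _ _ _ _ [_ _ TP_gen TQ_gen] Q.
have n_gt2 : (2 < n)%N by apply: leq_trans n_ge5.
have inscribed_Q i : concurrent (join (P i) (P (i + 1))) (q i) (q (i - k%:Z))
                     = incident (Q i) (join (P i) (P (i + 1))).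
  exact: concurrent_incident_meet.
have inscribed_TQ i : incident (Tk k Q i) (join (Tk k P i) (Tk k P (i + 1)))
    = concurrent (join (P (i + 1)) (P (i + 1 + k%:Z))) (q (i + 1)) (q (i + 1 - 1)).
  have -> : i + 1 - 1 = i by ring.
  exact: incident_Tk_Qof n_gt2 TP_gen TQ_gen.
split=> [concur | [QP TQTP] i].
- split=> i; first by rewrite -inscribed_Q; case: (concur i).
  by rewrite inscribed_TQ; case: (concur (i + 1)).
- split; first by rewrite inscribed_Q.
  have -> : i = i - 1 + 1 by ring.
  by rewrite -inscribed_TQ.
Qed.
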